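(* Let $2<p<\frac{10}{3}$, $\lambda_3<0$, and let $(a_1,r_1)\in(0,\bar a)\times(0,+\infty)$ satisfy $g(a_1,r_1)\ge0$. Then for any $a_2\in(0,a_1]$ one has $g(a_2,r_2)\ge0$ for every $r_2\in\left[\frac{a_2}{a_1}r_1,\,r_1\right]$.
   Context: $\Lambda:=\max\{|\lambda_1-\frac{4\pi}{3}\lambda_2|,|\lambda_1+\frac{8\pi}{3}\lambda_2|\}>0$ for given real $\lambda_1,\lambda_2$. For $q\in(2,6)$, $\gamma_q:=\frac{3(q-2)}{2q}$ and $C_q>0$ is a Gagliardo–Nirenberg constant: $\|u\|_q\le C_q\|\nabla u\|_2^{\gamma_q}\|u\|_2^{1-\gamma_q}$ for $u\in H^1(\mathbb{R}^3)$. $g(a,r):=\frac12-\frac{\Lambda}{2}C_4^4ra-\frac{2|\lambda_3|}{p}C_p^pa^{p(1-\gamma_p)}r^{p\gamma_p-2}$ for $a,r>0$. $\bar a:=(1/(2\alpha))^{3/4}$ with $\alpha:=\frac12(\Lambda C_4^4)^{\frac{p\gamma_p-2}{p\gamma_p-3}}\left(\frac{4|\lambda_3|(2-p\gamma_p)C_p^p}{p}\right)^{\frac{1}{3-p\gamma_p}}+2\left(\frac{C_p^p|\lambda_3|}{p}\right)^{\frac{1}{3-p\gamma_p}}\left(\frac{4(2-p\gamma_p)}{\Lambda C_4^4}\right)^{\frac{p\gamma_p-2}{3-p\gamma_p}}$. *)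

From Stdlib Require Import Reals.
Open Scope R_scope.

Definition gammaq (q : R) : R := 3 * (q - 2) / (2 * q).

Definition Lambda (l1 l2 : R) : R :=
  Rmax (Rabs (l1 - 4 * PI / 3 * l2)) (Rabs (l1 + 8 * PI / 3 * l2)).

Definition gfun (Lam C4 Cp p l3 a r : R) : R :=
  1 / 2 - Lam / 2 * C4 ^ 4 * r * a
  - 2 * Rabs l3 / p * Rpower Cp p * Rpower a (p * (1 - gammaq p))
      * Rpower r (p * gammaq p - 2).

Definition alphac (Lam C4 Cp p l3 : R) : R :=
  let pg := p * gammaq p in
  1 / 2 * Rpower (Lam * C4 ^ 4) ((pg - 2) / (pg - 3))
        * Rpower (4 * Rabs l3 * (2 - pg) * Rpower Cp p / p) (1 / (3 - pg))
  + 2 * Rpower (Rpower Cp p * Rabs l3 / p) (1 / (3 - pg))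
      * Rpower (4 * (2 - pg) / (Lam * C4 ^ 4)) ((pg - 2) / (3 - pg)).

Definition abar (Lam C4 Cp p l3 : R) : R :=
  Rpower (1 / (2 * alphac Lam C4 Cp p l3)) (3 / 4).

(* With e1 = p(1 - gamma_p) and e2 = p gamma_p - 2 we have e1 + e2 = p - 2 >= 0 and
   e2 <= 0 for p <= 10/3.  Writing a2 = s a1 with s <= 1, the constraint r2 >= s r1
   gives a2^e1 r2^e2 <= s^(e1 + e2) a1^e1 r1^e2 <= a1^e1 r1^e2, and trivially
   r2 a2 <= r1 a1; so both subtracted terms of g only decrease and g(a2, r2) >= g(a1, r1). *)
From Stdlib Require Import Reals Lra.
Open Scope R_scope.

Lemma Rpower_1_base (e : R) : Rpower 1 e = 1.
Proof. now unfold Rpower; rewrite ln_1, Rmult_0_r, exp_0. Qed.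

Lemma Rpower_le_antitone (x y e : R) :
  e <= 0 -> 0 < x <= y -> Rpower y e <= Rpower x e.
Proof.
  intros He Hxy.
  replace e with (- - e) by ring.
  rewrite (Rpower_Ropp y), (Rpower_Ropp x).
  apply Rinv_le_contravar; [apply exp_pos | apply Rle_Rpower_l; lra].
Qed.

Lemma Rpower_le_1 (s e : R) : 0 <= e -> 0 < s <= 1 -> Rpower s e <= 1.
Proof.
  intros He Hs.
  rewrite <- (Rpower_1_base e).
  now apply Rle_Rpower_l.
Qed.

Lemma Rpower_mul_le_scaled (e1 e2 a1 a2 r1 r2 : R) :
  0 <= e1 + e2 -> e2 <= 0 -> 0 < a2 <= a1 -> 0 < r1 -> a2 / a1 * r1 <= r2 ->
  Rpower a2 e1 * Rpower r2 e2 <= Rpower a1 e1 * Rpower r1 e2.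
Proof.
  intros He12 He2 Ha Hr1 Hr2.
  set (s := a2 / a1) in Hr2.
  assert (Hs : 0 < s <= 1).
  { unfold s; split; [apply Rdiv_lt_0_compat; lra|].
    apply Rmult_le_reg_r with a1; [lra|].
    unfold Rdiv; rewrite Rmult_assoc, Rinv_l; lra. }
  assert (Ha2 : a2 = s * a1) by (unfold s; field; lra).
  assert (Hsr1 : 0 < s * r1) by (apply Rmult_lt_0_compat; lra).
  assert (Hr2e : Rpower r2 e2 <= Rpower (s * r1) e2)
    by (apply Rpower_le_antitone; lra).
  assert (Hscale : Rpower s (e1 + e2) <= 1) by (apply Rpower_le_1; lra).
  assert (Hpos : 0 < Rpower a1 e1 * Rpower r1 e2)
    by (apply Rmult_lt_0_compat; apply exp_pos).
  assert (Ha2e : 0 < Rpower a2 e1) by apply exp_pos.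
  rewrite Ha2 in Ha2e |- *.
  apply Rle_trans with (Rpower (s * a1) e1 * Rpower (s * r1) e2);
    [apply Rmult_le_compat_l; lra|].
  rewrite <- !Rpower_mult_distr by lra.
  replace (Rpower s e1 * Rpower a1 e1 * (Rpower s e2 * Rpower r1 e2))
    with (Rpower s (e1 + e2) * (Rpower a1 e1 * Rpower r1 e2))
    by (rewrite Rpower_plus; ring).
  rewrite <- (Rmult_1_l (Rpower a1 e1 * Rpower r1 e2)) at 2.
  apply Rmult_le_compat_r; lra.
Qed.

Lemma mul_gammaq (p : R) : p <> 0 -> p * gammaq p = 3 * (p - 2) / 2.
Proof. intros Hp; unfold gammaq; field; exact Hp. Qed.

Lemma gfun_le_scaled (Lam C4 Cp p l3 a1 r1 a2 r2 : R) :
  0 <= Lam -> 2 <= p <= 10 / 3 ->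
  0 < a2 <= a1 -> 0 < r1 -> a2 / a1 * r1 <= r2 <= r1 ->
  gfun Lam C4 Cp p l3 a1 r1 <= gfun Lam C4 Cp p l3 a2 r2.
Proof.
  intros HLam Hp Ha Hr1 Hr2.
  unfold gfun.
  assert (Hr2pos : 0 < a2 / a1 * r1)
    by (apply Rmult_lt_0_compat; [apply Rdiv_lt_0_compat|]; lra).
  assert (Hpg : p * gammaq p = 3 * (p - 2) / 2) by (apply mul_gammaq; lra).
  assert (Hpower : Rpower a2 (p * (1 - gammaq p)) * Rpower r2 (p * gammaq p - 2)
                   <= Rpower a1 (p * (1 - gammaq p)) * Rpower r1 (p * gammaq p - 2)).
  { apply Rpower_mul_le_scaled; lra. }
  assert (Hcoef : 0 <= 2 * Rabs l3 / p * Rpower Cp p).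
  { apply Rmult_le_pos; [|left; apply exp_pos].
    apply Rmult_le_pos; [pose proof (Rabs_pos l3); lra | left; apply Rinv_0_lt_compat; lra]. }
  assert (Hlin : Lam / 2 * C4 ^ 4 * r2 * a2 <= Lam / 2 * C4 ^ 4 * r1 * a1).
  { assert (HK : 0 <= Lam / 2 * C4 ^ 4).
    { apply Rmult_le_pos; [lra|].
      replace (C4 ^ 4) with ((C4 * C4) * (C4 * C4)) by ring.
      apply Rle_0_sqr. }
    set (K := Lam / 2 * C4 ^ 4) in *.
    rewrite (Rmult_assoc K r2), (Rmult_assoc K r1).
    apply Rmult_le_compat_l; [exact HK|].
    apply Rmult_le_compat; lra. }
  pose proof (Rmult_le_compat_l _ _ _ Hcoef Hpower) as Hnonlin.
  rewrite <- !Rmult_assoc in Hnonlin; lra.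
Qed.

Theorem lemma2p5 (l1 l2 l3 C4 Cp p a1 r1 : R) :
  0 < Lambda l1 l2 ->
  0 < C4 -> 0 < Cp ->
  2 < p -> p < 10 / 3 -> l3 < 0 ->
  0 < a1 -> a1 < abar (Lambda l1 l2) C4 Cp p l3 -> 0 < r1 ->
  0 <= gfun (Lambda l1 l2) C4 Cp p l3 a1 r1 ->
  forall a2 : R, 0 < a2 -> a2 <= a1 ->
  forall r2 : R, a2 / a1 * r1 <= r2 -> r2 <= r1 ->
  0 <= gfun (Lambda l1 l2) C4 Cp p l3 a2 r2.
Proof.
  intros HLam _ _ Hp2 Hp10 _ _ _ Hr1 Hg a2 Ha2 Ha21 r2 Hr2l Hr2u.
  apply Rle_trans with (1 := Hg).
  apply gfun_le_scaled; lra.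
Qed.
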